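(* Let $q\ge2$ be even and $d\ge q$. Let $f$ be a density on $\mathbb{R}^d$ with mode $\boldsymbol\theta$, sufficiently smooth, whose $(q+1)$-st order term of the Taylor expansion around $\boldsymbol\theta$ is of the form $\prod_{i=1}^{q+1}\mathbf a_i^\top(\mathbf x-\boldsymbol\theta)$, where $\mathbf a_1,\ldots,\mathbf a_{q+1}$ span a $q$-dimensional subspace of $\mathbb{R}^d$, and suppose $\sum_{i=1}^{q+1}s_i\mathbf a_i=\mathbf 0$ for some coefficients with $s_1s_2\cdots s_{q+1}\neq0$. Then there is a choice of $\mathrm Q$ for which the asymptotic bias is equal to zero, i.e. $\nabla(\nabla^\top\mathrm Q\nabla)^{q/2}f(\boldsymbol\theta)=\mathbf 0$.
   Context: Setting: $\mathrm A=\{Hf(\boldsymbol\theta)\}^{-1}$ is assumed to exist. For a radial $q$-th order kernel $K(\mathbf x)=G(\|\mathbf x\|)$ and a $d\times d$ matrix $\mathrm P$ with $|\det\mathrm P|=1$, the elliptic kernel is $K_{\mathrm P}(\mathbf x)=K(\mathrm P\mathbf x)$ and $\mathrm Q=\mathrm P^{-1}\mathrm P^{-\top}$ (symmetric positive definite). The asymptotic bias of the kernel mode estimator with kernel $K_{\mathrm P}$ and bandwidth $h_n$ is $-\frac{\pi^{d/2}h_n^q}{2^{q-1}\Gamma(\frac{d+q}{2})\Gamma(\frac q2+1)}B_{d,q}(G)\,\mathrm A\,\nabla(\nabla^\top\mathrm Q\nabla)^{q/2}f(\boldsymbol\theta)$ with $B_{d,q}(G)=\int_0^\infty x^{d-1+q}G(x)dx\ne0$,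 so it vanishes iff $\nabla(\nabla^\top\mathrm Q\nabla)^{q/2}f(\boldsymbol\theta)=\mathbf 0$ (a quantity depending only on the $(q+1)$-st order Taylor term of $f$ at $\boldsymbol\theta$). *)

From HB Require Import structures.
From mathcomp Require Import all_boot all_order all_algebra.
From mathcomp Require Import all_classical all_reals all_analysis.
Set Implicit Arguments. Unset Strict Implicit. Unset Printing Implicit Defensive.
Import Order.TTheory GRing.Theory Num.Theory.
Import numFieldNormedType.Exports.
Local Open Scope ring_scope.

Section KernelModeDefs.
Variables (R : realType) (d : nat).

Definition partial (i : 'I_d) (f : 'rV[R]_d -> R) : 'rV[R]_d -> R :=
  fun x => derive f x (delta_mx 0 i).

(* iterated partial derivative: iter_partial [:: k1; ...; km] f
   = d_{k1} (d_{k2} ( ... (d_{km} f))) *)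
Definition iter_partial (s : seq 'I_d) (f : 'rV[R]_d -> R) : 'rV[R]_d -> R :=
  foldr partial f s.

Definition smooth_upto (n : nat) (f : 'rV[R]_d -> R) : Prop :=
  (forall s : seq 'I_d, (size s <= n)%N -> continuous (iter_partial s f)) /\
  (forall s : seq 'I_d, (size s < n)%N ->
     forall x, differentiable (iter_partial s f) x).

Definition taylor_term (n : nat) (f : 'rV[R]_d -> R) (th h : 'rV[R]_d) : R :=
  (n`!%:R)^-1 * \sum_(j : n.-tuple 'I_d)
     (iter_partial j f th * \prod_(m < n) h 0 (tnth j m)).

Definition hessian (f : 'rV[R]_d -> R) (th : 'rV[R]_d) : 'M[R]_d :=
  \matrix_(i, j) partial i (partial j f) th.

Definition LQ (Q : 'M[R]_d) (g : 'rV[R]_d -> R) : 'rV[R]_d -> R :=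
  fun x => \sum_(i < d) \sum_(j < d) Q i j * partial i (partial j g) x.

Definition bias_vec (q : nat) (Q : 'M[R]_d) (f : 'rV[R]_d -> R)
    (th : 'rV[R]_d) : 'rV[R]_d :=
  \row_(k < d) partial k (iter (q %/ 2) (LQ Q) f) th.

Definition dotv (a h : 'rV[R]_d) : R := \sum_(k < d) a 0 k * h 0 k.

End KernelModeDefs.

From HB Require Import structures.
From mathcomp Require Import all_boot all_order all_algebra all_fingroup.
From mathcomp Require Import all_classical all_reals all_analysis.
From mathcomp Require Import zify ring.
Import Order.TTheory GRing.Theory Num.Theory.
Import numFieldNormedType.Exports.

(* The k-th component of the bias vector is the contraction of the order-(q+1)
   derivative tensor of f at th, with its first slot set to k, against
   Q ⊗ ... ⊗ Q.  By polarization that tensor is the symmetrization of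
   a_1 ⊗ ... ⊗ a_(q+1), since both are symmetric with the same diagonal, so
   the bias is a sum over permutations sg of a_(sg 0),k times the product of
   the Q-inner products of consecutive pairs a_(sg (2r+1)), a_(sg (2r+2)).
   The vectors s_i a_i sum to zero and span a q-dimensional space, so some M
   sends them onto the vertices of a regular simplex; for Q = M Mᵀ every
   pair then contributes -λ / (s_i s_j), each product is
   (-λ)^(q/2) s_(sg 0) / ∏ s_i, and the bias is a multiple of ∑ s_i a_i = 0.
   Rescaling M makes |det P| = 1 for P = M⁻¹. *)

Set Implicit Arguments.
Unset Strict Implicit.
Unset Printing Implicit Defensive.

Local Open Scope ring_scope.

Section Contraction.
Variables (R : realType) (d : nat) (Q : 'M[R]_d).

Fixpoint contract (m : nat) (F : seq 'I_d -> R) : R :=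
  if m is m'.+1 then
    \sum_(i < d) \sum_(j < d) Q i j * contract m' (fun s => F [:: i, j & s])
  else F [::].

Definition qform (u w : 'rV[R]_d) : R := (u *m Q *m w^T) 0 0.

Lemma qformE u w : qform u w = \sum_(i < d) \sum_(j < d) Q i j * (u 0 i * w 0 j).
Proof.
rewrite /qform mxE exchange_big; apply: eq_bigr => i _.
rewrite mxE big_distrl /=; apply: eq_bigr => j _; rewrite !mxE; ring.
Qed.

Lemma eq_contract m F G : (forall s, size s = (2 * m)%N -> F s = G s) ->
  contract m F = contract m G.
Proof.
elim: m F G => [|m IHm] F G eqFG /=; first exact: eqFG.
apply: eq_bigr => i _; apply: eq_bigr => j _; congr (_ * _).
by apply: IHm => s size_s; apply: eqFG; rewrite /= size_s; lia.
Qed.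

Lemma contractZ m c F : contract m (fun s => c * F s) = c * contract m F.
Proof.
elim: m F => [|m IHm] F //=.
rewrite mulr_sumr; apply: eq_bigr => i _; rewrite mulr_sumr; apply: eq_bigr => j _.
by rewrite IHm mulrCA.
Qed.

Lemma contract_sum m (I : finType) (F : I -> seq 'I_d -> R) :
  contract m (fun s => \sum_(x : I) F x s) = \sum_(x : I) contract m (F x).
Proof.
elim: m F => [|m IHm] F //=.
rewrite [RHS]exchange_big; apply: eq_bigr => i _.
rewrite [RHS]exchange_big; apply: eq_bigr => j _.
by rewrite (IHm (fun x s => F x [:: i, j & s])) mulr_sumr.
Qed.

Lemma contract_prod m (b : nat -> 'rV[R]_d) (i0 : 'I_d) :
  contract m (fun s => \prod_(0 <= r < 2 * m) b r 0 (nth i0 s r)) =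
  \prod_(0 <= r < m) qform (b (2 * r)%N) (b (2 * r).+1).
Proof.
elim: m b => [|m IHm] b /=; first by rewrite !big_geq.
rewrite big_nat_recl // qformE big_distrl; apply: eq_bigr => i _.
rewrite big_distrl; apply: eq_bigr => j _.
rewrite (eq_contract (G := fun s => b 0%N 0 i * b 1%N 0 j *
                              \prod_(0 <= r < 2 * m) b r.+2 0 (nth i0 s r))); last first.
  by move=> s _; rewrite mulnS !big_nat_recl // mulrA.
rewrite contractZ IHm mulrA; congr (_ * _).
by apply: eq_bigr => r _; rewrite mulnS.
Qed.

Lemma is_derive_contract m (F : seq 'I_d -> 'rV[R]_d -> R) (dF : seq 'I_d -> R) x v :
  (forall s, size s = (2 * m)%N -> is_derive x v (F s) (dF s)) ->
  is_derive x v (fun y => contract m (F^~ y)) (contract m dF).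
Proof.
elim: m F dF => [|m IHm] F dF dF_F /=; first exact: dF_F.
have -> : (fun y => \sum_(i < d) \sum_(j < d) Q i j * contract m (fun s => F [:: i, j & s] y))
    = \sum_(i < d) \sum_(j < d) Q i j \*: (fun y => contract m (fun s => F [:: i, j & s] y)).
  by apply/funext => y; rewrite fct_sumE; apply: eq_bigr => i _; rewrite fct_sumE.
apply: is_derive_sum => i; apply: is_derive_sum => j; apply: is_deriveZ.
by apply: IHm => s size_s; apply: dF_F; rewrite /= size_s; lia.
Qed.

Lemma partial_contract m (F : seq 'I_d -> 'rV[R]_d -> R) k :
  (forall s, size s = (2 * m)%N -> forall y, differentiable (F s) y) ->
  partial k (fun y => contract m (F^~ y)) = fun y => contract m (fun s => partial k (F s) y).
Proof.
move=> F_diff; apply/funext => y; apply: derive_val; apply: is_derive_contract => s size_s.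
exact/derivableP/diff_derivable/F_diff.
Qed.

End Contraction.

Section IteratedOperator.
Variables (R : realType) (d n : nat) (Q : 'M[R]_d) (f : 'rV[R]_d -> R).
Hypothesis f_smooth : smooth_upto n f.

Lemma iter_LQ_contract m : (2 * m <= n)%N ->
  iter m (LQ Q) f = fun x => contract Q m (fun s => iter_partial s f x).
Proof.
elim: m => [//|m IHm] le_m_n; rewrite iterS IHm; last by lia.
apply/funext => x; apply: eq_bigr => i _; apply: eq_bigr => j _; congr (_ * _).
rewrite partial_contract => [|s size_s y]; last by apply: f_smooth.2; lia.
rewrite partial_contract // => s size_s y.
by apply: (f_smooth.2 (j :: s)); rewrite /= size_s; lia.
Qed.

Lemma partial_iter_LQ_contract m k : (2 * m < n)%N ->
  partial k (iter m (LQ Q) f) = fun x => contract Q m (fun s => iter_partial (k :: s) f x).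
Proof.
move=> lt_m_n; rewrite iter_LQ_contract 1?ltnW // partial_contract // => s size_s y.
by apply: f_smooth.2; rewrite size_s.
Qed.

End IteratedOperator.

Section Polarization.
Variables (R : numFieldType) (d n : nat).
Implicit Types (T : n.-tuple 'I_d -> R) (v : 'I_n -> 'rV[R]_d).

Definition tensor_eval T v : R :=
  \sum_(t : n.-tuple 'I_d) T t * \prod_(m < n) v m 0 (tnth t m).

Definition symmetric_tensor T : Prop :=
  forall (t : n.-tuple 'I_d) (sg : 'S_n), T [tuple tnth t (sg i) | i < n] = T t.

Lemma tensor_eval_perm T v (sg : 'S_n) : symmetric_tensor T ->
  tensor_eval T (fun m => v (sg m)) = tensor_eval T v.
Proof.
move=> T_sym; pose rho (t : n.-tuple 'I_d) := [tuple tnth t ((sg^-1)%g i) | i < n].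
have rho_inj : injective rho.
  move=> t1 t2 eq_rho; apply: eq_from_tnth => i.
  by have := congr1 (fun t => tnth t (sg i)) eq_rho; rewrite !tnth_mktuple permK.
rewrite /tensor_eval [RHS](reindex_inj rho_inj); apply: eq_bigr => t _.
rewrite T_sym; congr (_ * _).
rewrite [RHS](reindex_inj (@perm_inj _ sg)); apply: eq_bigr => m _.
by rewrite tnth_mktuple permK.
Qed.

Lemma tensor_eval_sum T v (E : {set 'I_n}) :
  tensor_eval T (fun _ => \sum_(i in E) v i) =
  \sum_(psi : {ffun 'I_n -> 'I_n})
     (\prod_(m < n) ((psi m \in E)%:R : R)) * tensor_eval T (fun m => v (psi m)).
Proof.
rewrite /tensor_eval.
under eq_bigr => t _.
  rewrite (eq_bigr (fun m => \sum_(i < n) (i \in E)%:R * v i 0 (tnth t m))); last first.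
    move=> m _; rewrite summxE big_mkcond /=; apply: eq_bigr => i _.
    by case: (i \in E); rewrite ?mul1r ?mul0r.
  rewrite bigA_distr_bigA /= mulr_sumr.
  under eq_bigr => psi _ do rewrite big_split /=.
  over.
rewrite exchange_big /=; apply: eq_bigr => psi _.
rewrite mulr_sumr; apply: eq_bigr => t _; ring.
Qed.

Lemma injectiveb_codom (psi : {ffun 'I_n -> 'I_n}) :
  injectiveb psi = [forall i, i \in codom psi].
Proof.
apply/injectiveP/forallP => [psi_inj i | psi_onto]; first exact: injF_onto.
have /image_injP psi_inj : #|codom psi| == #|'I_n|.
  by apply/eqP/eq_card => i; rewrite psi_onto.
by move=> x y; apply: psi_inj.
Qed.

Lemma sum_sign_subsets_injectiveb (psi : {ffun 'I_n -> 'I_n}) :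
  \sum_(E : {set 'I_n}) (\prod_(i < n) (if i \in E then 1 else -1 : R)) *
      \prod_(m < n) ((psi m \in E)%:R : R) = (injectiveb psi)%:R.
Proof.
pose G (i : 'I_n) : R := - ((i \notin codom psi)%:R).
have signed_cover (E : {set 'I_n}) :
  (\prod_(i < n) (if i \in E then 1 else -1 : R)) * \prod_(m < n) ((psi m \in E)%:R : R)
  = \prod_(i < n) (if i \in E then 1 else G i).
  have [/forallP psiE | /forallPn [m psi_mE]] := boolP [forall m, psi m \in E].
    rewrite [X in _ * X]big1 ?mulr1 => [|m _]; last by rewrite psiE.
    apply: eq_bigr => i _; case: ifP => // iE; rewrite /G.
    case psi_i: (i \in codom psi) => //.
    by move/codomP: psi_i => [m eq_i]; rewrite eq_i psiE in iE.
  rewrite [X in _ * X](bigD1 m) //= (negbTE psi_mE) mul0r mulr0.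
  by rewrite (bigD1 (psi m)) //= (negbTE psi_mE) /G codom_f oppr0 mul0r.
rewrite (eq_bigr _ (fun E _ => signed_cover E)).
rewrite -(@bigA_distr R 0 1 *%R +%R _ (fun _ => 1) G) injectiveb_codom.
rewrite (eq_bigr (fun i => ((i \in codom psi)%:R : R))); last first.
  by move=> i _; rewrite /G; case: (i \in codom psi); rewrite /= ?subr0 ?subrr.
have [/forallP psi_onto | /forallPn [i psi_i]] := boolP [forall i, i \in codom psi].
  by rewrite big1 // => i _; rewrite psi_onto.
by rewrite (bigD1 i) //= (negbTE psi_i) mul0r.
Qed.

Lemma polarization T v : symmetric_tensor T ->
  \sum_(E : {set 'I_n}) (\prod_(i < n) (if i \in E then 1 else -1)) *
      tensor_eval T (fun _ => \sum_(i in E) v i) = n`!%:R * tensor_eval T v.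
Proof.
move=> T_sym.
under eq_bigr => E _ do rewrite tensor_eval_sum mulr_sumr.
rewrite exchange_big /=.
under eq_bigr => psi _.
  under eq_bigr => E _ do rewrite mulrA.
  rewrite -mulr_suml sum_sign_subsets_injectiveb.
  over.
transitivity (\sum_(psi : {ffun 'I_n -> 'I_n}) (injectiveb psi)%:R * tensor_eval T v).
  apply: eq_bigr => psi _; have [/injectiveP psi_inj | _] := boolP (injectiveb psi);
    last by rewrite !mul0r.
  rewrite -(tensor_eval_perm v (perm psi_inj) T_sym).
  by congr (_ * tensor_eval T _); apply/funext => m; rewrite permE.
have card_inj : #|[set psi : {ffun 'I_n -> 'I_n} | injectiveb psi]| = n`!.
  by rewrite card_inj_ffuns card_ord ffactnn.
rewrite -mulr_suml -natr_sum -card_inj -sum1_card.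
congr (_%:R * _); rewrite big_mkcond [RHS]big_mkcond /=; apply: eq_bigr => psi _.
by rewrite inE; case: injectiveb.
Qed.

Lemma tensor_eval_delta T t : tensor_eval T (fun m => delta_mx 0 (tnth t m)) = T t.
Proof.
rewrite /tensor_eval (bigD1 t) //= big1 => [|m _]; last by rewrite mxE !eqxx.
rewrite mulr1 big1 ?addr0 // => u neq_ut.
have [m neq_m] : exists m, tnth u m != tnth t m.
  apply/existsP; apply: contraNT neq_ut => /existsPn eq_ut.
  by apply/eqP/eq_from_tnth => m; apply/eqP; rewrite -[_ == _]negbK eq_ut.
by rewrite (bigD1 m) //= mxE eqxx /= (negbTE neq_m) mul0r mulr0.
Qed.

Lemma symmetric_tensor_eq T1 T2 : symmetric_tensor T1 -> symmetric_tensor T2 ->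
  (forall h, tensor_eval T1 (fun=> h) = tensor_eval T2 (fun=> h)) -> T1 =1 T2.
Proof.
move=> T1_sym T2_sym eq_diag t; rewrite -tensor_eval_delta -[RHS]tensor_eval_delta.
apply: (@mulfI _ n`!%:R); first by rewrite pnatr_eq0 -lt0n fact_gt0.
rewrite -!polarization //; apply: eq_bigr => E _; by rewrite eq_diag.
Qed.

End Polarization.

Lemma prod_sum_tuple (R : comPzSemiRingType) (I : finType) n (F : 'I_n -> I -> R) :
  \prod_(i < n) \sum_(k : I) F i k = \sum_(t : n.-tuple I) \prod_(i < n) F i (tnth t i).
Proof.
rewrite bigA_distr_bigA (reindex (fun t : n.-tuple I => [ffun i => tnth t i])) /=.
  by apply: eq_bigr => t _; apply: eq_bigr => i _; rewrite ffunE.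
apply: onW_bij; exists (fun g : {ffun 'I_n -> I} => [tuple g i | i < n]) => t.
  by apply: eq_from_tnth => i; rewrite tnth_mktuple ffunE.
by apply/ffunP => i; rewrite !ffunE tnth_mktuple.
Qed.

Section SymmetrizedProduct.
Variables (R : realType) (d n : nat) (a : 'I_n -> 'rV[R]_d).

Definition sym_prod (t : n.-tuple 'I_d) : R :=
  \sum_(sg : 'S_n) \prod_(m < n) a (sg m) 0 (tnth t m).

Lemma sym_prod_symmetric : symmetric_tensor sym_prod.
Proof.
move=> t tau; rewrite /sym_prod (reindex_inj (mulgI tau)) /=.
apply: eq_bigr => sg _; rewrite [RHS](reindex_inj (@perm_inj _ tau)) /=.
by apply: eq_bigr => m _; rewrite tnth_mktuple permM.
Qed.

Lemma tensor_eval_sym_prod h :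
  tensor_eval sym_prod (fun=> h) = n`!%:R * \prod_(i < n) dotv (a i) h.
Proof.
rewrite -card_Sn mulr_natl -sumr_const /tensor_eval /sym_prod.
under eq_bigr do rewrite mulr_suml.
rewrite exchange_big /=; apply: eq_bigr => sg _.
rewrite [RHS](reindex_inj (@perm_inj _ sg)) /= /dotv prod_sum_tuple.
by apply: eq_bigr => t _; rewrite big_split.
Qed.

End SymmetrizedProduct.

Section TaylorTensor.
Variables (R : realType) (d n : nat) (f : 'rV[R]_d -> R) (th : 'rV[R]_d).
Variable a : 'I_n -> 'rV[R]_d.
Hypothesis f_sym : forall s1 s2 : seq 'I_d, size s1 = n -> perm_eq s1 s2 ->
  iter_partial s1 f th = iter_partial s2 f th.
Hypothesis f_taylor : forall x,
  taylor_term n f th (x - th) = \prod_(i < n) dotv (a i) (x - th).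

Lemma iter_partial_sym_prod (t : n.-tuple 'I_d) : iter_partial t f th = sym_prod a t.
Proof.
apply: (@symmetric_tensor_eq _ _ _ (fun t : n.-tuple 'I_d => iter_partial t f th))
  => [u sg | | h]; last 1 first.
- rewrite tensor_eval_sym_prod; have := f_taylor (h + th); rewrite addrK => <-.
  by rewrite /taylor_term mulrA mulfV ?mul1r.
- by apply: f_sym; [rewrite size_tuple | apply/tuple_permP; exists sg].
- exact: sym_prod_symmetric.
Qed.

Lemma iter_partial_nth_sym_prod (s : seq 'I_d) (i0 : 'I_d) : size s = n ->
  iter_partial s f th = \sum_(sg : 'S_n) \prod_(m < n) a (sg m) 0 (nth i0 s m).
Proof.
move=> /eqP size_s; rewrite -[s]/(tval (Tuple size_s)) iter_partial_sym_prod.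
by apply: eq_bigr => sg _; apply: eq_bigr => m _; rewrite (tnth_nth i0).
Qed.

End TaylorTensor.

Lemma prod_pairs (R : comPzSemiRingType) (g : nat -> R) m :
  \prod_(0 <= r < m) (g (2 * r)%N * g (2 * r).+1) = \prod_(0 <= t < 2 * m) g t.
Proof.
elim: m => [|m IHm]; first by rewrite !big_geq.
by rewrite big_nat_recr //= IHm mulnS !big_nat_recr //= mulrA.
Qed.

Lemma sum_perm_ord0 (R : numFieldType) n (g : 'I_n.+1 -> R) :
  \sum_(sg : 'S_n.+1) g (sg ord0) = n`!%:R * \sum_(i < n.+1) g i.
Proof.
have sum_at t : \sum_(sg : 'S_n.+1) g (sg t) = \sum_(sg : 'S_n.+1) g (sg ord0).
  rewrite [RHS](reindex_inj (mulgI (tperm ord0 t))) /=.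
  by apply: eq_bigr => sg _; rewrite permM tpermL.
apply: (@mulfI _ n.+1%:R); first by rewrite pnatr_eq0.
transitivity (\sum_(t < n.+1) \sum_(sg : 'S_n.+1) g (sg t)).
  by rewrite (eq_bigr _ (fun t _ => sum_at t)) sumr_const card_ord mulr_natl.
rewrite exchange_big (eq_bigr (fun=> \sum_i g i)) => [|sg _]; last first.
  by rewrite [RHS](reindex_inj (@perm_inj _ sg)).
by rewrite sumr_const card_Sn mulrA -natrM -factS mulr_natl.
Qed.

Section ContractSymProd.
Variables (R : realType) (d m : nat) (Q : 'M[R]_d) (a : 'I_(2 * m).+1 -> 'rV[R]_d).

Lemma contract_sym_prod_cons (k : 'I_d) :
  contract Q m (fun s => \sum_(sg : 'S_(2 * m).+1)
                          \prod_(i < (2 * m).+1) a (sg i) 0 (nth k (k :: s) i)) =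
  \sum_(sg : 'S_(2 * m).+1) a (sg ord0) 0 k *
     \prod_(0 <= r < m) qform Q (a (sg (inord (2 * r).+1))) (a (sg (inord (2 * r).+2))).
Proof.
rewrite contract_sum; apply: eq_bigr => sg _.
rewrite (@eq_contract _ _ _ _ _ (fun s => a (sg ord0) 0 k *
           \prod_(0 <= r < 2 * m) a (sg (inord r.+1)) 0 (nth k s r))).
  by rewrite contractZ contract_prod.
move=> s _; rewrite big_ord_recl big_mkord; congr (_ * _); apply: eq_bigr => r _.
by congr (a (sg _) 0 _); apply: val_inj; rewrite /= inordK // ltnS.
Qed.

Lemma prod_qform_pairs (s : 'I_(2 * m).+1 -> R) (lam : R) (sg : 'S_(2 * m).+1) :
  (forall i, s i != 0) ->
  (forall i j, i != j -> qform Q (a i) (a j) = - lam / (s i * s j)) ->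
  \prod_(0 <= r < m) qform Q (a (sg (inord (2 * r).+1))) (a (sg (inord (2 * r).+2)))
  = (- lam) ^+ m * s (sg ord0) / \prod_i s i.
Proof.
move=> s_neq0 a_gram.
have -> : \prod_i s i = s (sg ord0) * \prod_(0 <= t < 2 * m) s (sg (inord t.+1)).
  rewrite (reindex_inj (@perm_inj _ sg)) /= big_ord_recl big_mkord; congr (_ * _).
  by apply: eq_bigr => r _; congr (s (sg _)); apply: val_inj; rewrite /= inordK // ltnS.
have prod_neq0 : \prod_(0 <= t < 2 * m) s (sg (inord t.+1)) != 0.
  by rewrite prodf_seq_neq0; apply/allP => t _; rewrite s_neq0.
rewrite (eq_big_nat _ _ (F2 := fun r => - lam /
           (s (sg (inord (2 * r).+1)) * s (sg (inord (2 * r).+2))))) => [|r /andP [_ lt_rm]].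
  rewrite prodf_div prodr_const_nat subn0 (prod_pairs (fun t => s (sg (inord t.+1)))).
  by field; rewrite s_neq0 prod_neq0.
apply: a_gram; rewrite (inj_eq perm_inj); apply/eqP => /(congr1 val) /=.
by rewrite !inordK; lia.
Qed.

End ContractSymProd.

Section DotProduct.
Variables (R : realType) (d : nat).
Implicit Types u v : 'rV[R]_d.

Lemma dotv_mulmx u v : dotv u v = (u *m v^T) 0 0.
Proof. by rewrite /dotv mxE; apply: eq_bigr => k _; rewrite mxE. Qed.

Lemma dotvC u v : dotv u v = dotv v u.
Proof. by apply: eq_bigr => k _; rewrite mulrC. Qed.

Lemma dotvNl u v : dotv (- u) v = - dotv u v.
Proof. by rewrite !dotv_mulmx mulNmx mxE. Qed.

Lemma dotvZl c u v : dotv (c *: u) v = c * dotv u v.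
Proof. by rewrite !dotv_mulmx -scalemxAl mxE. Qed.

Lemma dotv_suml n (u : 'I_n -> 'rV[R]_d) v :
  dotv (\sum_(j < n) u j) v = \sum_(j < n) dotv (u j) v.
Proof.
by rewrite dotv_mulmx mulmx_suml summxE; apply: eq_bigr => j _; rewrite dotv_mulmx.
Qed.

Lemma dotv_row m (B : 'M[R]_(m, d)) i j : dotv (row i B) (row j B) = (B *m B^T) i j.
Proof. by rewrite /dotv mxE; apply: eq_bigr => k _; rewrite !mxE. Qed.

Lemma qform_mulmx_tr (M : 'M[R]_d) u v : qform (M *m M^T) u v = dotv (u *m M) (v *m M).
Proof. by rewrite /qform dotv_mulmx trmx_mul !mulmxA. Qed.

End DotProduct.

Lemma mulmx_scalar_const (R : comNzRingType) q (x1 y1 x2 y2 : R) :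
  (x1%:M + y1 *: const_mx 1) *m (x2%:M + y2 *: const_mx 1) =
  (x1 * x2)%:M + (x1 * y2 + y1 * x2 + q%:R * y1 * y2) *: (const_mx 1 : 'M[R]_q).
Proof.
have JJ : (const_mx 1 : 'M[R]_q) *m (const_mx 1 : 'M[R]_q) = q%:R *: const_mx 1.
  apply/matrixP => i j; rewrite !mxE (eq_bigr (fun=> 1)) => [|k _]; last by rewrite !mxE mulr1.
  by rewrite sumr_const card_ord mulr1.
rewrite mulmxDl !mulmxDr mul_scalar_mx mul_mx_scalar scale_scalar_mx.
rewrite -!scalemxAl -!scalemxAr JJ mul_scalar_mx !scalerA.
by apply/matrixP => i j; rewrite !mxE; ring.
Qed.

Lemma regular_simplex_gram (R : realType) q : (0 < q)%N ->
  exists2 W : 'M[R]_q, W \in unitmx & W *m W^T = (q.+1)%:R%:M - const_mx 1.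
Proof.
move=> q_gt0; have q_neq0 : q%:R != 0 :> R by rewrite pnatr_eq0 -lt0n.
pose alpha : R := Num.sqrt (q.+1)%:R; pose beta : R := (1 - alpha) / q%:R.
have alpha_neq0 : alpha != 0 by rewrite gt_eqF // sqrtr_gt0 ltr0n.
have alpha2 : alpha ^+ 2 = (q.+1)%:R by rewrite sqr_sqrtr // ler0n.
have q_beta : q%:R * beta = 1 - alpha by rewrite /beta mulrC divfK.
pose W : 'M[R]_q := alpha%:M + beta *: const_mx 1.
have W_sym : W^T = W by rewrite /W linearD /= tr_scalar_mx linearZ /= trmx_const.
exists W.
  have W_inv : W *m (alpha^-1%:M + (- (alpha^-1 * beta)) *: const_mx 1) = 1%:M.
    rewrite mulmx_scalar_const divff //.
    have -> : alpha * - (alpha^-1 * beta) + beta * alpha^-1 + q%:R * beta * - (alpha^-1 * beta)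
              = alpha^-1 * beta * (1 - alpha - q%:R * beta) by field.
    by rewrite q_beta subrr mulr0 scale0r addr0.
  by case/mulmx1_unit: W_inv.
have coef : alpha * beta + beta * alpha + q%:R * beta * beta = -1.
  have -> : alpha * beta + beta * alpha + q%:R * beta * beta = (1 - alpha ^+ 2) / q%:R.
    by rewrite /beta; field.
  by rewrite alpha2 -addn1 natrD; field.
by rewrite W_sym mulmx_scalar_const coef -expr2 alpha2 scaleN1r.
Qed.

Lemma row_free_mulmx_unit (F : fieldType) m n (A B : 'M[F]_(m, n)) :
  row_free A -> row_free B -> exists2 M, M \in unitmx & B = A *m M.
Proof.
move=> A_free B_free; have /eqmxMunitP [P P_unit eq_BA] : (B^T == A^T)%MS.
  by apply/andP; split; apply: submx_full; rewrite /row_full mxrank_tr.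
by exists P^T; rewrite ?unitmx_tr // -[B]trmxK eq_BA trmx_mul trmxK.
Qed.

Lemma rank_sum0_rows (F : fieldType) q n (r : 'I_q.+1 -> 'rV[F]_n) :
  \sum_i r i = 0 -> \rank (\matrix_(j < q) r (lift ord0 j)) = \rank (\matrix_i r i).
Proof.
move=> r_sum0; apply/eqmx_rank/andP; split; apply/row_subP => i; rewrite rowK.
  by apply: (eq_row_sub (lift ord0 i)); rewrite rowK.
case: (unliftP ord0 i) => [j ->|->]; first by apply: (eq_row_sub j); rewrite rowK.
have -> : r ord0 = - \sum_j r (lift ord0 j).
  by apply/eqP; rewrite -addr_eq0 -big_ord_recl r_sum0.
rewrite -scaleN1r; apply/scalemx_sub/summx_sub => j _.
by apply: (eq_row_sub j); rewrite rowK.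
Qed.

Lemma affine_frame_simplex (R : realType) q d (r : 'I_q.+1 -> 'rV[R]_d) :
  (0 < q)%N -> (q <= d)%N -> \rank (\matrix_i r i) = q -> \sum_i r i = 0 ->
  exists2 M, M \in unitmx & forall i j, i != j -> dotv (r i *m M) (r j *m M) = -1.
Proof.
move=> q_gt0 le_qd r_rank r_sum0.
have [W W_unit W_gram] := regular_simplex_gram R q_gt0.
pose B : 'M[R]_(q, d) := W *m pid_mx q.
have B_free : row_free B by rewrite /row_free mxrankMfree ?mxrank_unit // /row_free rank_pid_mx.
have A_free : row_free (\matrix_(j < q) r (lift ord0 j)).
  by rewrite /row_free rank_sum0_rows // r_rank.
have [M M_unit eq_B] := row_free_mulmx_unit A_free B_free.
exists M => //.
have B_gram : B *m B^T = (q.+1)%:R%:M - const_mx 1.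
  rewrite trmx_mul mulmxA -(mulmxA W) tr_pid_mx mul_pid_mx minnn (minn_idPr le_qd).
  by rewrite pid_mx_1 mulmx1 W_gram.
have gram_lift j1 j2 : dotv (r (lift ord0 j1) *m M) (r (lift ord0 j2) *m M)
                       = (q.+1)%:R *+ (j1 == j2) - 1.
  by rewrite -!(rowK (fun j => r (lift ord0 j))) -!row_mul -eq_B dotv_row B_gram !mxE.
have gram_ord0 j : dotv (r ord0 *m M) (r (lift ord0 j) *m M) = -1.
  have -> : r ord0 = - \sum_j r (lift ord0 j).
    by apply/eqP; rewrite -addr_eq0 -big_ord_recl r_sum0.
  rewrite mulNmx mulmx_suml dotvNl dotv_suml (eq_bigr _ (fun j' _ => gram_lift j' j)).
  rewrite sumrB sumr_const card_ord (bigD1 j) //= eqxx big1 => [|j' /negbTE -> //].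
  by rewrite addr0 mulr1n -addn1 natrD; ring.
move=> i j; case: (unliftP ord0 i) => [i' ->|->]; case: (unliftP ord0 j) => [j' ->|->].
- by rewrite (inj_eq lift_inj) gram_lift => /negbTE ->; rewrite sub0r.
- by rewrite dotvC gram_ord0.
- by rewrite gram_ord0.
- by rewrite eqxx.
Qed.

Lemma exists_scaled_det_norm1 (R : realType) n (M : 'M[R]_n) : M \in unitmx ->
  exists2 t : R, 0 < t & `|\det (t *: M)| = 1.
Proof.
case: n M => [|n] M M_unit; first by exists 1; rewrite ?det_mx00 ?normr1.
have det_gt0 : 0 < `|\det M| by rewrite normr_gt0 -unitfE -unitmxE.
pose t := (`|\det M| `^ (n.+1%:R)^-1)^-1.
have t_gt0 : 0 < t by rewrite invr_gt0 powR_gt0.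
exists t => //; rewrite detZ normrM normrX gtr0_norm //.
rewrite /t exprVn -powR_mulrn ?powR_ge0 // -powRrM mulVf ?pnatr_eq0 // powRr1 //.
by rewrite mulVf ?gt_eqF.
Qed.

Lemma exists_simplex_metric (R : realType) d q (a : 'I_q.+1 -> 'rV[R]_d) (s : 'I_q.+1 -> R) :
  (0 < q)%N -> (q <= d)%N -> \rank (\matrix_i a i) = q ->
  \sum_i s i *: a i = 0 -> (forall i, s i != 0) ->
  exists P : 'M[R]_d, exists lam : R, [/\ P \in unitmx, `|\det P| = 1, 0 < lam &
    forall i j, i != j -> qform (invmx P *m (invmx P)^T) (a i) (a j) = - lam / (s i * s j)].
Proof.
move=> q_gt0 le_qd a_rank sa_sum0 s_neq0.
have sa_rank : \rank (\matrix_i (s i *: a i)) = q.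
  rewrite -[RHS]a_rank; apply/eqmx_rank/andP; split; apply/row_subP => i; rewrite rowK.
    by apply/scalemx_sub/(eq_row_sub i); rewrite rowK.
  by rewrite -[a i](scalerK (s_neq0 i)); apply/scalemx_sub/(eq_row_sub i); rewrite rowK.
have [M0 M0_unit M0_simplex] := affine_frame_simplex q_gt0 le_qd sa_rank sa_sum0.
have [t t_gt0 det_t] := exists_scaled_det_norm1 M0_unit.
have tM0_unit : t *: M0 \in unitmx by rewrite unitmxZ ?unitfE ?gt_eqF.
exists (invmx (t *: M0)), (t ^+ 2); split.
- by rewrite unitmx_inv.
- by rewrite det_inv normrV ?det_t ?invr1 // -unitmxE.
- by rewrite exprn_gt0.
move=> i j neq_ij; rewrite invmxK qform_mulmx_tr.
have sa_M0 k : a k *m (t *: M0) = (t / s k) *: (s k *: a k *m M0).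
  by rewrite -scalemxAl scalerA divfK // scalemxAr.
rewrite !sa_M0 !dotvZl dotvC dotvZl dotvC M0_simplex //.
by field; rewrite !s_neq0.
Qed.
Theorem proposition3 (R : realType) (d q : nat)
  (f : 'rV[R]_d -> R) (th : 'rV[R]_d)
  (a : 'I_q.+1 -> 'rV[R]_d) (s : 'I_q.+1 -> R) :
  ~~ odd q -> (2 <= q)%N -> (q <= d)%N ->
  (* f is a density (nonnegative) with mode th *)
  (forall x, 0 <= f x) ->
  (forall x, f x <= f th) ->
  (* sufficiently smooth: C^{q+1} *)
  smooth_upto (q.+1) f ->
  (* symmetry of the (q+1)-st order partials at th (Schwarz; implied by C^{q+1}) *)
  (forall s1 s2 : seq 'I_d, size s1 = q.+1 -> perm_eq s1 s2 ->
     iter_partial s1 f th = iter_partial s2 f th) ->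
  (* standing assumption: A = (Hf(th))^{-1} exists *)
  hessian f th \in unitmx ->
  (* the (q+1)-st order Taylor term at th is prod_i a_i^T (x - th) *)
  (forall x, taylor_term (q.+1) f th (x - th)
             = \prod_(i < q.+1) dotv (a i) (x - th)) ->
  (* a_1, ..., a_{q+1} span a q-dimensional subspace *)
  \rank (\matrix_(i < q.+1) a i) = q ->
  \sum_(i < q.+1) s i *: a i = 0 ->
  \prod_(i < q.+1) s i != 0 ->
  exists P : 'M[R]_d,
    [/\ P \in unitmx, `|\det P| = 1 &
        bias_vec q (invmx P *m (invmx P)^T) f th = 0].
Proof.
move=> q_even q_ge2 le_qd _ _ f_smooth f_sym _ f_taylor a_rank sa_sum0 s_prod.
have s_neq0 i : s i != 0.
  by apply: contraNneq s_prod => si0; rewrite (bigD1 i) //= si0 mul0r.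
have [P [lam [P_unit P_det lam_gt0 P_gram]]] :=
  exists_simplex_metric (ltnW q_ge2) le_qd a_rank sa_sum0 s_neq0.
exists P; split => //.
have [m q_2m] : exists m, q = (2 * m)%N.
  by exists q./2; rewrite -[LHS]odd_double_half (negbTE q_even) add0n -mul2n.
subst q; apply/rowP => k; rewrite !mxE mulKn // (partial_iter_LQ_contract _ f_smooth) //.
rewrite (@eq_contract _ _ _ _ _ (fun s0 => \sum_(sg : 'S_(2 * m).+1)
           \prod_(i < (2 * m).+1) a (sg i) 0 (nth k (k :: s0) i))) => [|s0 size_s0]; last first.
  by apply: (iter_partial_nth_sym_prod f_sym f_taylor); rewrite /= size_s0.
rewrite contract_sym_prod_cons.
under eq_bigr => sg _ do rewrite (prod_qform_pairs sg s_neq0 P_gram).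
transitivity ((- lam) ^+ m / \prod_i s i *
              \sum_(sg : 'S_(2 * m).+1) s (sg ord0) * a (sg ord0) 0 k).
  by rewrite mulr_sumr; apply: eq_bigr => sg _; ring.
have sa_k : \sum_i s i * a i 0 k = 0.
  transitivity ((\sum_i s i *: a i) 0 k); last by rewrite sa_sum0 mxE.
  by rewrite summxE; apply: eq_bigr => i _; rewrite mxE.
by rewrite (sum_perm_ord0 (fun i => s i * a i 0 k)) sa_k !mulr0.
Qed.
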